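(* Let $A\in\mathbb{R}^{m\times n}$, $b\in\mathbb{R}^m$, $f(x)=\frac12\|Ax-b\|^2=\frac12x^tQx-x^tc+\frac12b^tb$ with $Q=A^tA$, $c=A^tb$. Suppose IMRO-2D is applied to minimizing $f$ from a starting point $x^0$. Then the sequence of iterates generated by IMRO-2D is the same as the sequence of iterates generated by the linear conjugate gradient method for minimizing $\frac12x^tQx-x^tc$ started at $x^0$.
   Context: IMRO-2D applied to $f$ (with no $\ell_1$ term) is the following iteration. Let $r^0=\nabla f(x^0)=Qx^0-c$, $\sigma_0=\frac{(r^0)^tQr^0}{(r^0)^tr^0}$ and $x^1=x^0-\frac{1}{\sigma_0}r^0$. For $k\ge1$, with $r^k=\nabla f(x^k)$ and $d^k=x^k-x^{k-1}$, one chooses a scalar $\sigma_k$ and a vector $u_k\in\mathrm{span}\{r^k,d^k\}$ such that $H_k=\sigma_k\mathbf I-u_ku_k^t$ is positive definite and $w^tH_kw=w^tQw$ for all $w\in\mathrm{span}\{r^k,d^k\}$ (i.e. the quadratic model $f(x^k)+\langle\nabla f(x^k),x-x^k\rangle+\frac12(x-x^k)^tH_k(x-x^k)$ coincides with $f$ on $x^k+\mathrm{span}\{r^k,d^k\}$), and sets $x^{k+1}=x^k-H_k^{-1}r^k$, the minimizer of that quadratic model. The statement concerns iterates for which this construction is well defined. The linear conjugate gradient method is the standard one: $p^0=-r^0$, $\alpha_k=\frac{(r^k)^tr^k}{(p^k)^tQp^k}$, $x^{k+1}=x^k+\alpha_kp^k$, $r^{k+1}=r^k+\alpha_kQp^k$,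 $p^{k+1}=-r^{k+1}+\frac{(r^{k+1})^tr^{k+1}}{(r^k)^tr^k}p^k$. *)

From HB Require Import structures.
From mathcomp Require Import all_boot all_order all_algebra.
From mathcomp Require Import reals.
Set Implicit Arguments. Unset Strict Implicit. Unset Printing Implicit Defensive.
Import Order.TTheory GRing.Theory Num.Theory.
Local Open Scope ring_scope.

Section Defs.
Variables (R : realType) (n : nat).

Definition dotv (u v : 'cV[R]_n) : R := (u^T *m v) 0 0.

(* gradient of 1/2 x^t Q x - x^t c *)
Definition grad (Q : 'M[R]_n) (c : 'cV[R]_n) (x : 'cV[R]_n) : 'cV[R]_n :=
  Q *m x - c.

Definition imro_H (sigma : R) (u : 'cV[R]_n) : 'M[R]_n :=
  sigma%:M - u *m u^T.

Definition imro_first_step (Q : 'M[R]_n) (c x0 x1 : 'cV[R]_n) : Prop :=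
  let r0 := grad Q c x0 in
  let sigma0 := dotv r0 (Q *m r0) / dotv r0 r0 in
  x1 = x0 - (1 / sigma0) *: r0.

Definition imro_step (Q : 'M[R]_n) (c xprev xk : 'cV[R]_n)
    (sigma : R) (u xnext : 'cV[R]_n) : Prop :=
  let r := grad Q c xk in
  let d := xk - xprev in
  let H := imro_H sigma u in
  [/\ exists a b : R, u = a *: r + b *: d,
      (forall w : 'cV[R]_n, w != 0 -> 0 < dotv w (H *m w)),
      (forall a b : R, let w := a *: r + b *: d in
         dotv w (H *m w) = dotv w (Q *m w))
    & xnext = xk - invmx H *m r].

Fixpoint cg_state (Q : 'M[R]_n) (c x0 : 'cV[R]_n) (k : nat)
    : 'cV[R]_n * 'cV[R]_n * 'cV[R]_n :=
  match k with
  | 0 => let r0 := Q *m x0 - c in (x0, r0, - r0)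
  | k'.+1 =>
      let '(x, r, p) := cg_state Q c x0 k' in
      let alpha := dotv r r / dotv p (Q *m p) in
      let x' := x + alpha *: p in
      let r' := r + alpha *: (Q *m p) in
      let beta := dotv r' r' / dotv r r in
      (x', r', - r' + beta *: p)
  end.

Definition cg_iter (Q : 'M[R]_n) (c x0 : 'cV[R]_n) (k : nat) : 'cV[R]_n :=
  (cg_state Q c x0 k).1.1.

End Defs.

(* An IMRO-2D step minimizes its quadratic model, which agrees with f on
   x^k + span{r^k, d^k}; the minimizer x^{k+1} is characterized by
   x^{k+1} - x^k in that span and grad f(x^{k+1}) orthogonal to it, whatever
   admissible sigma_k, u_k were chosen.  Conjugate gradients satisfy exactly
   these conditions: its step alpha_{k+1} p^{k+1} lies in
   span{r^{k+1}, alpha_k p^k}, and the new residual r^{k+2} is orthogonal to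
   r^{k+1} and to p^k.  Both methods also take the same steepest-descent
   first step, so the iterates coincide by induction. *)
From HB Require Import structures.
From mathcomp Require Import all_boot all_order all_algebra.
From mathcomp Require Import reals ring lra.
Set Implicit Arguments. Unset Strict Implicit. Unset Printing Implicit Defensive.
Import Order.TTheory GRing.Theory Num.Theory.
Local Open Scope ring_scope.

Section DotProduct.
Variables (R : realType) (n : nat).
Implicit Types (u v w : 'cV[R]_n) (M : 'M[R]_n).

Lemma dotvC u v : dotv u v = dotv v u.
Proof. by rewrite /dotv -[u^T *m v]trmxK trmx_mul trmxK mxE. Qed.

Lemma dotvDr u v w : dotv u (v + w) = dotv u v + dotv u w.
Proof. by rewrite /dotv mulmxDr mxE. Qed.

Lemma dotvZr a u v : dotv u (a *: v) = a * dotv u v.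
Proof. by rewrite /dotv -scalemxAr mxE. Qed.

Lemma dotvNr u v : dotv u (- v) = - dotv u v.
Proof. by rewrite -scaleN1r dotvZr mulN1r. Qed.

Lemma dotvDl u v w : dotv (v + w) u = dotv v u + dotv w u.
Proof. by rewrite !(dotvC _ u) dotvDr. Qed.

Lemma dotvZl a u v : dotv (a *: v) u = a * dotv v u.
Proof. by rewrite !(dotvC _ u) dotvZr. Qed.

Lemma dotvNl u v : dotv (- v) u = - dotv v u.
Proof. by rewrite !(dotvC _ u) dotvNr. Qed.

Lemma dotv0r u : dotv u 0 = 0.
Proof. by rewrite /dotv mulmx0 mxE. Qed.

Lemma dotv0l u : dotv 0 u = 0.
Proof. by rewrite dotvC dotv0r. Qed.

Lemma dotvvE u : dotv u u = \sum_i u i 0 ^+ 2.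
Proof. by rewrite /dotv mxE; apply: eq_bigr => i _; rewrite mxE expr2. Qed.

Lemma dotvv_eq0 u : (dotv u u == 0) = (u == 0).
Proof.
apply/idP/eqP => [|->]; last by rewrite dotv0r.
rewrite dotvvE psumr_eq0 => [/allP u0|i _]; last exact: sqr_ge0.
apply/matrixP => i j; rewrite ord1 mxE.
by apply/eqP; rewrite -sqrf_eq0; apply: u0; rewrite mem_index_enum.
Qed.

Lemma dotv_sym M u v : M^T = M -> dotv u (M *m v) = dotv v (M *m u).
Proof. by move=> sM; rewrite dotvC /dotv trmx_mul sM mulmxA. Qed.

Lemma dotv_quadD M v w : M^T = M ->
  dotv (v + w) (M *m (v + w)) =
  dotv v (M *m v) + dotv w (M *m w) + 2 * dotv v (M *m w).
Proof. by move=> sM; rewrite mulmxDr !dotvDl !dotvDr (dotv_sym w v sM); ring. Qed.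

End DotProduct.

Lemma dotv_mulmx (R : realType) (m n : nat) (M : 'M[R]_(m, n)) u v :
  dotv u (M *m v) = dotv (M^T *m u) v.
Proof. by rewrite /dotv trmx_mul trmxK mulmxA. Qed.

Lemma grad_add (R : realType) (n : nat) (Q : 'M[R]_n) c x t :
  grad Q c (x + t) = grad Q c x + Q *m t.
Proof. by rewrite /grad mulmxDr addrAC. Qed.

Section IMRO.
Variables (R : realType) (n : nat).
Implicit Types (u v w r d t x y : 'cV[R]_n) (M N Q H : 'M[R]_n).

Definition in_span2 r d w := exists a b : R, w = a *: r + b *: d.

Lemma in_span2_l r d : in_span2 r d r.
Proof. by exists 1, 0; rewrite scale1r scale0r addr0. Qed.

Lemma in_span2_r r d : in_span2 r d d.
Proof. by exists 0, 1; rewrite scale1r scale0r add0r. Qed.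

Lemma in_span2D r d v w :
  in_span2 r d v -> in_span2 r d w -> in_span2 r d (v + w).
Proof.
move=> [a1 [b1 ->]] [a2 [b2 ->]]; exists (a1 + a2), (b1 + b2).
by rewrite !scalerDl addrACA.
Qed.

Lemma in_span2Z r d a w : in_span2 r d w -> in_span2 r d (a *: w).
Proof.
move=> [a1 [b1 ->]]; exists (a * a1), (a * b1).
by rewrite scalerDr !scalerA.
Qed.

Lemma span2_orth_eq0 r d v :
  in_span2 r d v -> dotv v r = 0 -> dotv v d = 0 -> v = 0.
Proof.
move=> [a [b vE]] vr vd; apply/eqP; rewrite -dotvv_eq0.
by rewrite {2}vE dotvDr !dotvZr vr vd !mulr0 addr0.
Qed.

Lemma span2_polarize M N r d v w : M^T = M -> N^T = N ->
  (forall a b, let z := a *: r + b *: d in dotv z (M *m z) = dotv z (N *m z)) ->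
  in_span2 r d v -> in_span2 r d w -> dotv v (M *m w) = dotv v (N *m w).
Proof.
move=> sM sN qMN [a1 [b1 ->]] [a2 [b2 ->]].
have := qMN (a1 + a2) (b1 + b2); rewrite /=.
have -> : (a1 + a2) *: r + (b1 + b2) *: d = (a1 *: r + b1 *: d) + (a2 *: r + b2 *: d).
  by rewrite !scalerDl addrACA.
rewrite (dotv_quadD _ _ sM) (dotv_quadD _ _ sN) qMN (qMN a2 b2); lra.
Qed.

Lemma imro_H_tr sigma u : (imro_H sigma u)^T = imro_H sigma u.
Proof. by rewrite /imro_H linearB /= tr_scalar_mx trmx_mul trmxK. Qed.

Lemma imro_H_mul sigma u t : imro_H sigma u *m t = sigma *: t - dotv u t *: u.
Proof.
rewrite /imro_H mulmxBl mul_scalar_mx -mulmxA; congr (_ - _).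
by apply/matrixP => i j; rewrite !mxE big_ord1 (ord1 j) mulrC.
Qed.

Lemma posdef_unitmx H : H^T = H ->
  (forall w, w != 0 -> 0 < dotv w (H *m w)) -> H \in unitmx.
Proof.
move=> sH Hpos; rewrite -row_free_unit -kermx_eq0; apply/eqP/row_matrixP => i.
rewrite row0; set z := row i (kermx H).
have Hz : H *m z^T = 0 by rewrite -sH -trmx_mul /z -row_mul mulmx_ker row0 trmx0.
have [/(congr1 trmx)|z_neq0] := eqVneq z^T 0; first by rewrite trmxK trmx0.
by have := Hpos _ z_neq0; rewrite Hz dotv0r ltxx.
Qed.

(* H t + r lies in span{r, d} (as H t = sigma t - (u.t) u), and it is
   orthogonal to that span because H and Q agree there as bilinear forms. *)
Lemma imro_H_solve Q r d sigma u t : Q^T = Q ->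
  in_span2 r d u ->
  (forall w, w != 0 -> 0 < dotv w (imro_H sigma u *m w)) ->
  (forall a b, let z := a *: r + b *: d in
     dotv z (imro_H sigma u *m z) = dotv z (Q *m z)) ->
  in_span2 r d t -> dotv (r + Q *m t) r = 0 -> dotv (r + Q *m t) d = 0 ->
  invmx (imro_H sigma u) *m r = - t.
Proof.
move=> sQ u_span Hpos HQ t_span orth_r orth_d.
set H := imro_H sigma u.
have HQ_on z : in_span2 r d z -> dotv z (H *m t) = dotv z (Q *m t).
  by move=> z_span; apply: span2_polarize (imro_H_tr _ _) sQ HQ z_span t_span.
have Ht_r : H *m t + r = 0.
  apply: (span2_orth_eq0 (d := d)).
  - rewrite imro_H_mul -scaleNr.
    apply: in_span2D; last exact: in_span2_l.
    by apply: in_span2D; apply: in_span2Z.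
  - rewrite dotvDl dotvC HQ_on; last exact: in_span2_l.
    by rewrite dotvC addrC -dotvDl.
  - rewrite dotvDl dotvC HQ_on; last exact: in_span2_r.
    by rewrite dotvC addrC -dotvDl.
have Hinv : H \in unitmx by apply: posdef_unitmx (imro_H_tr _ _) Hpos.
have -> : r = H *m (- t) by rewrite mulmxN; apply/eqP; rewrite -addr_eq0 addrC Ht_r.
exact: mulKmx.
Qed.

Lemma imro_step_eq Q c xprev xk sigma u xnext y : Q^T = Q ->
  imro_step Q c xprev xk sigma u xnext ->
  in_span2 (grad Q c xk) (xk - xprev) (y - xk) ->
  dotv (grad Q c y) (grad Q c xk) = 0 -> dotv (grad Q c y) (xk - xprev) = 0 ->
  xnext = y.
Proof.
move=> sQ [u_span Hpos HQ ->] y_span orth_r orth_d.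
have gy : grad Q c y = grad Q c xk + Q *m (y - xk) by rewrite -grad_add addrC subrK.
rewrite gy in orth_r orth_d.
by rewrite (imro_H_solve sQ u_span Hpos HQ y_span orth_r orth_d) opprK addrC subrK.
Qed.

End IMRO.

Section ConjugateGradient.
Variables (R : realType) (m n : nat) (A : 'M[R]_(m, n)) (b : 'cV[R]_m).
Variable x0 : 'cV[R]_n.
Local Notation Q := (A^T *m A).
Local Notation c := (A^T *m b).

Definition cg_x k := cg_iter Q c x0 k.
Definition cg_r k := (cg_state Q c x0 k).1.2.
Definition cg_p k := (cg_state Q c x0 k).2.
Definition cg_alpha k := dotv (cg_r k) (cg_r k) / dotv (cg_p k) (Q *m cg_p k).
Definition cg_beta k := dotv (cg_r k.+1) (cg_r k.+1) / dotv (cg_r k) (cg_r k).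

Lemma cg_xS k : cg_x k.+1 = cg_x k + cg_alpha k *: cg_p k.
Proof.
by rewrite /cg_x /cg_iter /cg_alpha /cg_r /cg_p /=; case: cg_state => [[]].
Qed.

Lemma cg_rS k : cg_r k.+1 = cg_r k + cg_alpha k *: (Q *m cg_p k).
Proof. by rewrite /cg_alpha /cg_r /cg_p /=; case: cg_state => [[]]. Qed.

Lemma cg_pS k : cg_p k.+1 = - cg_r k.+1 + cg_beta k *: cg_p k.
Proof. by rewrite /cg_beta /cg_r /cg_p /=; case: cg_state => [[]]. Qed.

Lemma cg_xSB k : cg_x k.+1 - cg_x k = cg_alpha k *: cg_p k.
Proof. by rewrite cg_xS addrC addKr. Qed.

Lemma trQ : Q^T = Q.
Proof. by rewrite trmx_mul trmxK. Qed.

Lemma cg_rE k : cg_r k = grad Q c (cg_x k).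
Proof. by elim: k => [//|k IHk]; rewrite cg_rS cg_xS grad_add IHk scalemxAr. Qed.

Lemma cg_first_step : imro_first_step Q c x0 (cg_x 1).
Proof.
rewrite /imro_first_step cg_xS /cg_alpha /cg_p /cg_r /cg_x /cg_iter /=.
by rewrite mulmxN dotvNl dotvNr opprK div1r invf_div scalerN.
Qed.

Lemma cg_stall k : cg_r k = 0 -> cg_r k.+1 = 0 /\ cg_p k.+1 = 0.
Proof.
move=> r0; have rS0 : cg_r k.+1 = 0.
  by rewrite cg_rS /cg_alpha r0 dotv0l mul0r scale0r addr0.
by rewrite cg_pS /cg_beta rS0 dotv0l mul0r scale0r oppr0 addr0.
Qed.

Definition cg_inv k :=
  dotv (cg_r k) (cg_p k) = - dotv (cg_r k) (cg_r k) /\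
  dotv (cg_p k) (Q *m cg_r k) = - dotv (cg_p k) (Q *m cg_p k).

Lemma cg_r_range k : cg_r k = A^T *m (A *m cg_x k - b).
Proof. by rewrite cg_rE /grad mulmxBr mulmxA. Qed.

Lemma dotv_Q u v : dotv u (Q *m v) = dotv (A *m u) (A *m v).
Proof. by rewrite -mulmxA dotv_mulmx trmxK. Qed.

(* Q = A^T A is only semidefinite, but r^k lies in the range of A^T, so a
   direction of zero curvature (A p = 0) is orthogonal to r^k. *)
Lemma cg_curvature_neq0 k : cg_inv k -> cg_r k != 0 ->
  dotv (cg_p k) (Q *m cg_p k) != 0.
Proof.
move=> [rp _]; apply: contra; rewrite dotv_Q dotvv_eq0 => /eqP Ap0.
rewrite -dotvv_eq0 -oppr_eq0 -rp cg_r_range dotvC dotv_mulmx trmxK Ap0.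
by rewrite dotv0l.
Qed.

Lemma cg_orthogonality k : cg_inv k ->
  [/\ dotv (cg_r k.+1) (cg_r k) = 0, dotv (cg_r k.+1) (cg_p k) = 0
     & dotv (cg_p k.+1) (Q *m cg_p k) = 0].
Proof.
move=> inv; have [rp pQr] := inv.
have [r0|r_neq0] := eqVneq (cg_r k) 0.
  by have [-> ->] := cg_stall r0; rewrite !dotv0l.
have rr_neq0 : dotv (cg_r k) (cg_r k) != 0 by rewrite dotvv_eq0.
have pQp_neq0 := cg_curvature_neq0 inv r_neq0.
have rSr : dotv (cg_r k.+1) (cg_r k) = 0.
  rewrite cg_rS dotvDl dotvZl (dotvC (Q *m _)) (dotv_sym _ _ trQ) pQr /cg_alpha.
  by field.
split => //.
  by rewrite cg_rS dotvDl dotvZl rp (dotvC (Q *m _)) /cg_alpha mulfVK // addNr.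
have rSrS : dotv (cg_r k.+1) (cg_r k.+1) =
    cg_alpha k * dotv (cg_r k.+1) (Q *m cg_p k).
  by rewrite {2}cg_rS dotvDr dotvZr rSr add0r.
rewrite cg_pS dotvDl dotvNl dotvZl /cg_beta rSrS /cg_alpha.
by field; rewrite rr_neq0 pQp_neq0.
Qed.

Lemma cg_inv_holds k : cg_inv k.
Proof.
elim: k => [|k IHk].
  by split; rewrite /cg_p /cg_r /= ?mulmxN ?dotvNl ?dotvNr ?opprK.
have [_ rSp pSQp] := cg_orthogonality IHk.
split; first by rewrite cg_pS dotvDr dotvNr dotvZr rSp mulr0 addr0.
have QpS : Q *m cg_p k.+1 = - (Q *m cg_r k.+1) + cg_beta k *: (Q *m cg_p k).
  by rewrite cg_pS mulmxDr mulmxN scalemxAr.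
by rewrite [in RHS]QpS dotvDr dotvNr dotvZr pSQp mulr0 addr0 opprK.
Qed.

Lemma cg_step_in_span k :
  in_span2 (cg_r k.+1) (cg_x k.+1 - cg_x k) (cg_x k.+2 - cg_x k.+1).
Proof.
have [r0|r_neq0] := eqVneq (cg_r k) 0.
  have [_ p0] := cg_stall r0.
  by exists 0, 0; rewrite cg_xSB p0 scaler0 !scale0r addr0.
have alpha_neq0 : cg_alpha k != 0.
  rewrite /cg_alpha mulf_neq0 ?invr_eq0 ?dotvv_eq0 //.
  exact: cg_curvature_neq0 (cg_inv_holds k) r_neq0.
have pE : cg_p k = (cg_alpha k)^-1 *: (cg_x k.+1 - cg_x k).
  by rewrite cg_xSB scalerA mulVf // scale1r.
rewrite (cg_xSB k.+1) cg_pS pE -[- cg_r k.+1]scaleN1r.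
apply: in_span2Z; apply: in_span2D; apply: in_span2Z; first exact: in_span2_l.
by apply: in_span2Z; apply: in_span2_r.
Qed.

Lemma cg_res_orth_res k : dotv (cg_r k.+1) (cg_r k) = 0.
Proof. by have [] := cg_orthogonality (cg_inv_holds k). Qed.

Lemma cg_res_orth_step k : dotv (cg_r k.+2) (cg_x k.+1 - cg_x k) = 0.
Proof.
have [_ rSp pSQp] := cg_orthogonality (cg_inv_holds k).
rewrite cg_xSB dotvZr (cg_rS k.+1) dotvDl dotvZl (dotvC (Q *m _)).
by rewrite (dotv_sym _ _ trQ) rSp pSQp mulr0 addr0 mulr0.
Qed.

End ConjugateGradient.

Theorem theorem1 (R : realType) (m n : nat) (A : 'M[R]_(m, n)) (b : 'cV[R]_m)
    (x : nat -> 'cV[R]_n) (sigma : nat -> R) (u : nat -> 'cV[R]_n) :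
  let Q := A^T *m A in
  let c := A^T *m b in
  imro_first_step Q c (x 0%N) (x 1%N) ->
  (forall k : nat, (0 < k)%N ->
     imro_step Q c (x k.-1) (x k) (sigma k) (u k) (x k.+1)) ->
  forall k : nat, x k = cg_iter Q c (x 0%N) k.
Proof.
move=> Q c first step.
suff xE k : x k = cg_x A b (x 0%N) k /\ x k.+1 = cg_x A b (x 0%N) k.+1.
  by move=> k; case: (xE k).
elim: k => [|k [xk xk1]]; split => //.
  exact: etrans first (esym (cg_first_step A b (x 0%N))).
have := step k.+1 isT; rewrite /= xk xk1 => /imro_step_eq; apply.
- exact: trQ.
- by rewrite -cg_rE; apply: cg_step_in_span.
- by rewrite -!cg_rE cg_res_orth_res.
- by rewrite -!cg_rE cg_res_orth_step.
Qed.
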